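(* Let $X$ be a Tychonoff space. The following are equivalent: (i) $X$ is almost locally compact; (ii) $X$ contains a dense locally compact subspace; (iii) every open nonempty $U\subset X$ contains an open nonempty relatively compact subset; (iv) the compact-open convergence on $\mathcal{C}(X)$ is stronger than the uo convergence, i.e. every net in $\mathcal C(X)$ converging uniformly on compact subsets of $X$ to $f$ uo-converges to $f$ in the vector lattice $\mathcal C(X)$.
   Context: $\mathcal C(X)$ is the vector lattice of real-valued continuous functions on $X$ with the pointwise order. $X$ is almost locally compact if the set of points of $X$ having a compact neighborhood is dense in $X$. In a vector lattice, a net order converges to $f$ if there is a set $G$ with $\bigwedge G=0$ such that for each $g\in G$ the net is eventually in $[f-g,f+g]$; it uo-converges to $f$ if $|f_\alpha-f|\wedge g$ order converges to $0$ for every $g\ge 0$. *)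

From HB Require Import structures.
From mathcomp Require Import all_boot all_order all_algebra.
From mathcomp Require Import all_classical all_reals all_analysis.
Set Implicit Arguments. Unset Strict Implicit. Unset Printing Implicit Defensive.
Import Order.TTheory GRing.Theory Num.Theory numFieldNormedType.Exports.
Local Open Scope classical_set_scope.
Local Open Scope ring_scope.

Definition tychonoff_space (X : topologicalType) : Prop :=
  completely_regular_space X /\ hausdorff_space X.

Definition has_compact_nbhd (X : topologicalType) (x : X) : Prop :=
  exists K : set X, compact K /\ nbhs x K.

Definition almost_locally_compact (X : topologicalType) : Prop :=
  dense [set x : X | has_compact_nbhd x].

(* A neighborhood of x in
   the subspace D is a subset of D containing N `&` D for some neighborhood
   N of x in X, and a subset of D is compact in D iff it is compact in X. *)
Definition locally_compact_subspace (X : topologicalType) (D : set X) : Prop :=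
  forall x, D x -> exists K : set X,
    [/\ compact K, K `<=` D & exists2 N, nbhs x N & N `&` D `<=` K].

Definition directed_set (I : Type) (le : I -> I -> Prop) : Prop :=
  [/\ (exists i : I, True),
      (forall i, le i i),
      (forall i j k, le i j -> le j k -> le i k) &
      (forall i j, exists k, le i k /\ le j k)].

Definition eventually_net (I : Type) (le : I -> I -> Prop) (P : I -> Prop) :=
  exists i0, forall i, le i0 i -> P i.

Section CX.
Variables (R : realType) (X : topologicalType).

Definition inf_is_zero_CX (G : set (X -> R)) : Prop :=
  [/\ (forall g, G g -> continuous g),
      (forall g, G g -> forall x, 0 <= g x) &
      (forall h : X -> R, continuous h ->
         (forall g, G g -> forall x, h x <= g x) -> forall x, h x <= 0)].

Definition order_conv_CX (I : Type) (le : I -> I -> Prop)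
    (F : I -> X -> R) (f : X -> R) : Prop :=
  exists G : set (X -> R), inf_is_zero_CX G /\
    forall g, G g -> eventually_net le
      (fun i => forall x, f x - g x <= F i x /\ F i x <= f x + g x).

Definition uo_conv_CX (I : Type) (le : I -> I -> Prop)
    (F : I -> X -> R) (f : X -> R) : Prop :=
  forall g : X -> R, continuous g -> (forall x, 0 <= g x) ->
    order_conv_CX le (fun i x => Order.min `|F i x - f x| (g x)) (fun _ => 0).

Definition compact_open_conv (I : Type) (le : I -> I -> Prop)
    (F : I -> X -> R) (f : X -> R) : Prop :=
  forall K : set X, compact K -> forall eps : R, 0 < eps ->
    eventually_net le (fun i => forall x, K x -> `|F i x - f x| < eps).

Definition compact_open_stronger_than_uo : Prop :=
  forall (I : Type) (le : I -> I -> Prop) (F : I -> X -> R) (f : X -> R),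
    directed_set le -> (forall i, continuous (F i)) -> continuous f ->
    compact_open_conv le F f -> uo_conv_CX le F f.

End CX.

From HB Require Import structures.
From mathcomp Require Import all_boot all_order all_algebra.
From mathcomp Require Import all_classical all_reals all_analysis.
From mathcomp Require Import lra.
Import Order.TTheory GRing.Theory Num.Theory numFieldNormedType.Exports.
Local Open Scope classical_set_scope.
Local Open Scope ring_scope.

(* (i) <-> (ii): the points with a compact neighbourhood form a locally compact
   subspace (shrink a compact neighbourhood by regularity), and in a Hausdorff
   space a dense subspace that is locally compact at x gives x a compact
   neighbourhood in X. (i) <-> (iii): in a Hausdorff space the closure of an
   open subset of a compact set is compact.
   For (i) -> (iv), min(|F i - f|, g) is eventually below e + g (1 - phi) for
   every e > 0 and every bump phi with compact support, and these majorants have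
   infimum 0 in C(X) because the centres of such bumps are dense.
   For (iv) -> (i), suppose a nonempty open U contains no point with a compact
   neighbourhood and let g be a bump supported in U. The net of bumps at y
   vanishing on K, directed by the compact sets K, converges to 0 uniformly on
   compacts; if h is eventually above min(bump, g), then h >= g off a compact
   set, hence everywhere, since otherwise {h < g} would be an open subset of U
   inside a compact set. So g would lie below a family with infimum 0. *)

Set Implicit Arguments. Unset Strict Implicit. Unset Printing Implicit Defensive.

Section bump.
Variables (R : realType) (X : topologicalType).

Definition bump (a : X) (B : set X) : X -> R := fun x => 1 - Urysohn [set a] B x.

Lemma bump_continuous a B : continuous (bump a B).
Proof. by move=> x; apply: cvgB; [exact: cvg_cst | exact: Urysohn_continuous]. Qed.

Lemma bump_01 a B x : 0 <= bump a B x <= 1.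
Proof.
have := @Urysohn_range _ R [set a] B _ (imageT _ x).
by rewrite /= in_itv /= /bump => /andP[? ?]; apply/andP; split; lra.
Qed.

Hypothesis crsX : completely_regular_space X.

Lemma bump_center a B : closed B -> ~ B a -> bump a B a = 1.
Proof.
move=> cB nBa; rewrite /bump.
have -> : Urysohn [set a] B a = 0 :> R.
  by apply: (Urysohn_sub0 (crsX cB nBa)); exists a.
by rewrite subr0.
Qed.

Lemma bump_eq0 a B x : closed B -> ~ B a -> B x -> bump a B x = 0.
Proof.
move=> cB nBa Bx; rewrite /bump.
have -> : Urysohn [set a] B x = 1 :> R.
  by apply: (Urysohn_sub1 (crsX cB nBa)); exists x.
by rewrite subrr.
Qed.

End bump.

Section almost_locally_compact.
Variable X : topologicalType.

Lemma open_sub_compact_has_compact_nbhd (K U : set X) :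
  compact K -> open U -> U `<=` K -> U `<=` [set x | has_compact_nbhd x].
Proof.
move=> cK oU UK x Ux; exists K; split => //.
by apply: (filterS UK); exact: open_nbhs_nbhs.
Qed.

Lemma dense_subset_closed (D U K : set X) :
  dense D -> open U -> closed K -> U `&` D `<=` K -> U `<=` K.
Proof.
move=> dD oU cK UDK y Uy; apply: contrapT => nKy.
have oUK : open (U `&` ~` K) by apply: openI => //; exact: closed_openC.
have [z [[Uz nKz] Dz]] := dD _ (ex_intro _ y (conj Uy nKy)) oUK.
exact/nKz/UDK.
Qed.

Lemma regular_locally_compact_subspace :
  regular_space X -> locally_compact_subspace [set x : X | has_compact_nbhd x].
Proof.
move=> rX x [K [cK]]; rewrite {1}nbhsE => -[U [oU Ux] UK].
have [B nB cBU] := rX x U (open_nbhs_nbhs (conj oU Ux)).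
exists (closure B); split.
- apply: (subclosed_compact _ cK); first exact: closed_closure.
  by move=> y /cBU /UK.
- by move=> y /cBU; exact: (open_sub_compact_has_compact_nbhd cK oU UK).
- by exists B => // y [By _]; exact: subset_closure.
Qed.

Lemma dense_locally_compact_subspace_almost_locally_compact (D : set X) :
  hausdorff_space X -> dense D -> locally_compact_subspace D ->
  almost_locally_compact X.
Proof.
move=> hX dD lD V V0 oV; have [x [Vx Dx]] := dD V V0 oV.
have [K [cK _ [N nN NDK]]] := lD x Dx.
have : nbhs x (N `&` V) by apply: filterI => //; exact: open_nbhs_nbhs.
rewrite nbhsE => -[U [oU Ux] UNV].
have UK : U `<=` K.
  apply: (dense_subset_closed dD oU (compact_closed hX cK)).
  by move=> y [/UNV[Ny _] Dy]; exact: NDK.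
exists x; split => //; exact: (open_sub_compact_has_compact_nbhd cK oU UK).
Qed.

Lemma almost_locally_compact_open_precompact :
  hausdorff_space X -> almost_locally_compact X ->
  forall U : set X, open U -> U !=set0 ->
    exists V : set X, [/\ open V, V !=set0, V `<=` U & precompact V].
Proof.
move=> hX aX U oU U0; have [x [Ux [K [cK nK]]]] := aX U U0 oU.
have : nbhs x (U `&` K) by apply: filterI => //; exact: open_nbhs_nbhs.
rewrite nbhsE => -[V [oV Vx] VUK].
exists V; split => //; first by exists x.
- by move=> y /VUK[].
- rewrite precompactE; apply: (subclosed_compact _ cK); first exact: closed_closure.
  rewrite [K](closure_id K).1; last exact: compact_closed.
  by apply: closureS => y /VUK[].
Qed.

Lemma open_precompact_almost_locally_compact :
  (forall U : set X, open U -> U !=set0 ->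
    exists V : set X, [/\ open V, V !=set0, V `<=` U & precompact V]) ->
  almost_locally_compact X.
Proof.
move=> pX U U0 oU; have [V [oV [x Vx] VU pV]] := pX U oU U0.
exists x; split; first exact: VU.
have cV : compact (closure V) by rewrite -precompactE.
exact: (open_sub_compact_has_compact_nbhd cV oV (@subset_closure _ V)).
Qed.

End almost_locally_compact.

Section uo_convergence.
Variables (R : realType) (X : topologicalType).

Lemma open_lt_continuous (u v : X -> R) :
  continuous u -> continuous v -> open [set x | u x < v x].
Proof.
move=> uc vc.
have -> : [set x | u x < v x] = (fun x => v x - u x) @^-1` [set r | 0 < r].
  by apply/seteqP; split => x /=; rewrite subr_gt0.
apply: open_comp; last exact: open_gt.
by move=> x _; apply: cvgB; [exact: vc | exact: uc].
Qed.

Lemma continuous_le_dense (D : set X) (u v : X -> R) :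
  dense D -> continuous u -> continuous v ->
  (forall x, D x -> u x <= v x) -> forall x, u x <= v x.
Proof.
move=> dD uc vc uvD x; rewrite leNgt; apply/negP => vux.
have [y [/= vuy Dy]] := dD _ (ex_intro _ x vux) (open_lt_continuous vc uc).
by move: (uvD y Dy); rewrite leNgt vuy.
Qed.

Definition compactly_supported_bump (phi : X -> R) : Prop :=
  [/\ continuous phi, (forall x, 0 <= phi x <= 1) &
      exists2 K, compact K & forall x, ~ K x -> phi x = 0].

Lemma compactly_supported_bump_at y :
  completely_regular_space X -> has_compact_nbhd y ->
  exists2 phi, compactly_supported_bump phi & phi y = 1.
Proof.
move=> crsX [K [cK]]; rewrite nbhsE => -[U [oU Uy] UK].
have cU : closed (~` U) by exact: open_closedC.
have nUy : ~ (~` U) y by [].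
exists (bump R y (~` U)); last exact: bump_center.
split; [exact: bump_continuous | exact: bump_01 |].
by exists K => // x nKx; apply: bump_eq0 => // Ux; exact/nKx/UK.
Qed.

Definition bump_majorants (g : X -> R) : set (X -> R) :=
  [set h | exists e phi, [/\ 0 < e, compactly_supported_bump phi &
                             h = fun x => e + g x * (1 - phi x)]].

Lemma bump_majorant_ge0 (e gx p : R) :
  0 < e -> 0 <= gx -> p <= 1 -> 0 <= e + gx * (1 - p).
Proof. by move=> e0 g0 p1; rewrite addr_ge0 ?(ltW e0) // mulr_ge0 ?subr_ge0. Qed.

Lemma min_le_bump_majorant (a e gx p : R) :
  0 < e -> 0 <= gx -> 0 <= p <= 1 -> a < e \/ p = 0 ->
  Order.min a gx <= e + gx * (1 - p).
Proof.
move=> e0 g0 /andP[p0 p1] [ae|->].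
- by rewrite ge_min (le_trans (ltW ae)) // lerDl mulr_ge0 // subr_ge0.
- by rewrite subr0 mulr1 ge_min lerDr (ltW e0) orbT.
Qed.

Lemma bump_majorants_inf0 (g : X -> R) :
  completely_regular_space X -> almost_locally_compact X ->
  continuous g -> (forall x, 0 <= g x) -> inf_is_zero_CX (bump_majorants g).
Proof.
move=> crsX aX gc g0; split.
- move=> _ [e [phi [_ [phic _ _] ->]]] x.
  apply: cvgD; first exact: cvg_cst.
  by apply: cvgM; [exact: gc | apply: cvgB; [exact: cvg_cst | exact: phic]].
- move=> _ [e [phi [e0 [_ phi01 _] ->]]] x.
  by apply: bump_majorant_ge0 => //; case/andP: (phi01 x).
move=> u uc uG; apply: (continuous_le_dense aX uc (fun=> cvg_cst _)).
move=> y /(compactly_supported_bump_at crsX)[phi phib phiy].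
apply/ler_addgt0Pr => e e0; rewrite add0r.
have := uG (fun x => e + g x * (1 - phi x)) _ y.
rewrite phiy subrr mulr0 addr0; apply.
by exists e, phi.
Qed.

Lemma almost_locally_compact_compact_open_stronger_than_uo :
  completely_regular_space X -> almost_locally_compact X ->
  compact_open_stronger_than_uo R X.
Proof.
move=> crsX aX I le F f _ _ _ conv g gc g0.
exists (bump_majorants g); split; first exact: bump_majorants_inf0.
move=> _ [e [phi [e0 [_ phi01 [K cK phiK]] ->]]].
have [i0 Fi0] := conv K cK e e0; exists i0 => i /Fi0 FK x /=.
rewrite sub0r add0r; split.
- rewrite (@le_trans _ _ 0) ?le_min ?normr_ge0 ?g0 // oppr_le0.
  by apply: bump_majorant_ge0 => //; case/andP: (phi01 x).
- apply: min_le_bump_majorant => //.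
  by have [Kx|nKx] := pselect (K x); [left; exact: FK | right; exact: phiK].
Qed.

Lemma le_off_compact (U K : set X) (g h : X -> R) :
  open U -> (forall x, U x -> ~ has_compact_nbhd x) ->
  continuous g -> continuous h -> (forall x, ~ U x -> g x = 0) ->
  (forall x, 0 <= h x) -> compact K -> (forall y, ~ K y -> g y <= h y) ->
  forall x, g x <= h x.
Proof.
move=> oU nU gc hc gU h0 cK ghK x.
have [Ux|nUx] := pselect (U x); last by rewrite gU ?h0.
rewrite leNgt; apply/negP => hgx.
pose P := U `&` [set y | h y < g y].
have oP : open P by apply: openI => //; exact: open_lt_continuous.
have PK : P `<=` K.
  by move=> y [_ hgy]; apply: contrapT => /ghK; rewrite leNgt hgy.
exact: nU Ux (open_sub_compact_has_compact_nbhd cK oP PK (conj Ux hgx)).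
Qed.

Definition escape_index := ({K : set X | compact K} * X)%type.

Definition escape_le (i j : escape_index) : Prop := sval i.1 `<=` sval j.1.

Definition escape_net (i : escape_index) : X -> R :=
  if pselect (~ sval i.1 i.2) then bump R i.2 (sval i.1) else fun=> 0.

Lemma escape_le_directed : X -> directed_set escape_le.
Proof.
move=> x0; split.
- by exists (exist _ set0 compact0, x0).
- by move=> i.
- by move=> i j k; exact: subset_trans.
- move=> [[K1 cK1] y1] [[K2 cK2] y2].
  by exists (exist _ (K1 `|` K2) (compactU cK1 cK2), x0); split => z /= ?;
    [left | right].
Qed.

Lemma escape_net_continuous i : continuous (escape_net i).
Proof.
rewrite /escape_net; case: pselect => ?; first exact: bump_continuous.
by move=> x; exact: cvg_cst.
Qed.

Hypotheses (crsX : completely_regular_space X) (hX : hausdorff_space X).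

Lemma escape_net_eq0 i x : sval i.1 x -> escape_net i x = 0.
Proof.
case: i => [[K cK] y] /= Kx; rewrite /escape_net /=.
by case: pselect => //= nKy; apply: bump_eq0 => //; exact: compact_closed.
Qed.

Lemma escape_net_center (K : set X) (cK : compact K) y :
  ~ K y -> escape_net (exist _ K cK, y) y = 1.
Proof.
move=> nKy; rewrite /escape_net /=.
by case: pselect => //= _; apply: bump_center => //; exact: compact_closed.
Qed.

Lemma escape_net_compact_open_conv0 : X ->
  compact_open_conv escape_le escape_net (fun=> 0).
Proof.
move=> x0 K cK e e0; exists (exist _ K cK, x0) => i Ki x Kx.
by rewrite escape_net_eq0 ?subrr ?normr0 //; exact: Ki.
Qed.

Lemma compact_open_stronger_than_uo_almost_locally_compact :
  compact_open_stronger_than_uo R X -> almost_locally_compact X.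
Proof.
move=> coX; apply: contrapT => /denseNE[U [[x0 [oU Ux0]] UW]].
have nU x : U x -> ~ has_compact_nbhd x.
  by move=> Ux Wx; have : (U `&` [set x | has_compact_nbhd x]) x by []; rewrite UW.
have cU : closed (~` U) by exact: open_closedC.
have nUx0 : ~ (~` U) x0 by [].
pose g := bump R x0 (~` U).
have gc : continuous g by exact: bump_continuous.
have g01 x : 0 <= g x <= 1 by exact: bump_01.
have g0 x : 0 <= g x by case/andP: (g01 x).
have [G [[Gc G0 Ginf] Gev]] := coX _ _ _ _ (escape_le_directed x0)
  escape_net_continuous (fun=> cvg_cst _) (escape_net_compact_open_conv0 x0) g gc g0.
suff gG h : G h -> forall x, g x <= h x.
  by have := Ginf g gc gG x0; rewrite /g bump_center // ler10.
move=> Gh; have [[[K cK] y0] Hev] := Gev h Gh.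
apply: (le_off_compact oU nU gc (Gc h Gh) _ (G0 h Gh) cK) => [x nUx|y nKy].
  exact: bump_eq0.
have := (Hev (exist _ K cK, y) (@subset_refl _ K) y).2.
by rewrite /= escape_net_center // subr0 normr1 add0r min_r //; case/andP: (g01 y).
Qed.

End uo_convergence.

Theorem theorem7p4 (R : realType) (X : topologicalType) :
  tychonoff_space X ->
  [/\ (almost_locally_compact X <->
        (exists D : set X, dense D /\ locally_compact_subspace D)),
      (almost_locally_compact X <->
        (forall U : set X, open U -> (U !=set0) ->
           exists V : set X, [/\ open V, (V !=set0), (V `<=` U) & precompact V])) &
      (almost_locally_compact X <-> compact_open_stronger_than_uo R X)].
Proof.
move=> [crsX hX]; split; split.
- move=> aX; exists [set x | has_compact_nbhd x]; split => //.
  exact/regular_locally_compact_subspace/(@completely_regular_regular R).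
- move=> [D [dD lD]].
  exact: (dense_locally_compact_subspace_almost_locally_compact hX dD lD).
- exact: almost_locally_compact_open_precompact.
- exact: open_precompact_almost_locally_compact.
- exact: almost_locally_compact_compact_open_stronger_than_uo.
- exact: compact_open_stronger_than_uo_almost_locally_compact.
Qed.
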